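(* Let $\mathcal{C}$, $\mathcal{F}$, $\prec$ be as in the context, let $\mathcal{Q}$ be a prime ideal of $\mathcal{C}$, let $h\in\mathcal{C}\smallsetminus\mathcal{Q}$, and let $g_1,\ldots,g_r\in\hat{\mathcal{D}}_n(\mathcal{C}[h^{-1}])\langle z\rangle\smallsetminus\hat{\mathcal{D}}_n(\mathcal{Q}[h^{-1}])\langle z\rangle$ be such that for each $j$ the numerator of $\mathrm{lc}^{\mathrm{mod}\mathcal{Q}}(g_j)$ divides $h$ in $\mathcal{C}$. Let $\Delta_1\cup\cdots\cup\Delta_r\cup\bar\Delta$ be the partition of $\mathbb{N}^{2n+1}$ associated with $e_j=\exp^{\mathrm{mod}\mathcal{Q}}(g_j)$, i.e. $\Delta_1=e_1+\mathbb{N}^{2n+1}$, $\Delta_j=(e_j+\mathbb{N}^{2n+1})\smallsetminus\bigcup_{k<j}\Delta_k$ for $j\ge2$, and $\bar\Delta=\mathbb{N}^{2n+1}\smallsetminus\bigcup_j\Delta_j$. Then for every $P\in\hat{\mathcal{D}}_n(\mathcal{C}[h^{-1}])\langle z\rangle$ there exist $q_1,\ldots,q_r,R,T\in\hat{\mathcal{D}}_n(\mathcal{F})\langle z\rangle$ such that (o) $P=\sum_j q_jg_j+R+T$; (i) if $q_j\neq0$ then $\mathrm{Supp}(q_j)+\exp^{\mathrm{mod}\mathcal{Q}}(g_j)\subset\Delta_j$; (ii) if $R\ne0$ then $\mathrm{Supp}(R)\subset\bar\Delta$; (iii) $q_1,\ldots,q_r,R\in\hat{\mathcal{D}}_n(\mathcal{C}[h^{-1}])\langle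 z\rangle$ and $T\in\hat{\mathcal{D}}_n(\mathcal{Q}[h^{-1}])\langle z\rangle$. Moreover $(q_1,\ldots,q_r,R)$ is unique modulo $\hat{\mathcal{D}}_n(\mathcal{Q}[h^{-1}])\langle z\rangle$: for any two such tuples, the differences of corresponding components lie in $\hat{\mathcal{D}}_n(\mathcal{Q}[h^{-1}])\langle z\rangle$.
   Context: $x=(x_1,\ldots,x_n)$. For a commutative ring $A$, $\hat{\mathcal{D}}_n(A)\langle z\rangle$ is the $A[[x]]$-algebra generated by $\partial_{x_1},\ldots,\partial_{x_n}$ and a central variable $z$, with commuting $\partial_{x_i}$ and $[\partial_{x_i},a]=\frac{\partial a}{\partial x_i}z$ for $a\in A[[x]]$; each element is written uniquely $P=\sum c_{\alpha\beta k}x^\alpha\partial_x^\beta z^k$ ($c_{\alpha\beta k}\in A$), and $\mathrm{Supp}(P)=\{(\alpha,\beta,k)\in\mathbb{N}^{2n+1}: c_{\alpha\beta k}\neq0\}$. $\mathcal{C}$ is a commutative integral domain with $1$ (not necessarily noetherian) such that no nonzero integer lies in a prime ideal of $\mathcal{C}$; $\mathcal{F}=\mathrm{Frac}(\mathcal{C})$. For a subring $A\subset\mathcal{F}$, $\hat{\mathcal{D}}_n(A)\langle z\rangle$ is viewed inside $\hat{\mathcal{D}}_n(\mathcal{F})\langle z\rangle$. For $h\in\mathcal{C}$, $\mathcal{C}[h^{-1}]$ is the localization, and $\hat{\mathcal{D}}_n(\mathcal{Q}[h^{-1}])\langle z\rangle$ is the set of elements of $\hat{\mathcal{D}}_n(\mathcal{C}[h^{-1}])\langle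 z\rangle$ all of whose coefficients are of the form $c/h^l$ with $c\in\mathcal{Q}$. $\mathcal{C}_\mathcal{Q}$ is the localization at $\mathcal{Q}$, and $\langle\mathcal{Q}\rangle$ is the set of elements of $\hat{\mathcal{D}}_n(\mathcal{F})\langle z\rangle$ whose coefficients are $c/c'$ with $c\in\mathcal{Q}$. An admissible order $\prec$ is a total order on $\mathbb{N}^{2n}$ compatible with addition (a monomial order on monomials $x^\alpha\xi^\beta$) with $x_i\prec1$ and $x_i\xi_i\succ1$ for all $i$. $\prec^h$ on $\mathbb{N}^{2n+1}$: $(\alpha,\beta,k)\prec^h(\alpha',\beta',k')$ iff $|\beta|+k<|\beta'|+k'$, or equality and $(\alpha,\beta)\prec(\alpha',\beta')$. Fix an admissible $\prec$; all maxima below are for $\prec^h$. For $P\in\hat{\mathcal{D}}_n(\mathcal{C}_\mathcal{Q})\langle z\rangle\smallsetminus\langle\mathcal{Q}\rangle$, write its coefficients as $c_{\alpha\beta k}/c'_{\alpha\beta k}$ with $c'_{\alpha\beta k}\notin\mathcal{Q}$; $\exp^{\mathrm{mod}\mathcal{Q}}(P)$ is the $\prec^h$-maximum of the $(\alpha,\beta,k)$ with $c_{\alpha\beta k}\notin\mathcal{Q}$, $\mathrm{lc}^{\mathrm{mod}\mathcal{Q}}(P)$ is the coefficient $c/c'$ of $P$ at that exponent (its numerator is $c$), and $\mathrm{lm}^{\mathrm{mod}\mathcal{Q}}(P)$ is the corresponding term. *)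

From HB Require Import structures.
From mathcomp Require Import all_boot all_order all_algebra.
Set Implicit Arguments. Unset Strict Implicit. Unset Printing Implicit Defensive.
Import Order.TTheory GRing.Theory Num.Theory.
Local Open Scope ring_scope.

(* Multi-indices and exponents (alpha, beta, k) in N^(2n+1).               *)
Definition mi (n : nat) := {ffun 'I_n -> nat}.
Definition expo (n : nat) := (mi n * mi n * nat)%type.

Definition mi_add n (a b : mi n) : mi n := [ffun i => (a i + b i)%N].
Definition mi_sub n (a b : mi n) : mi n := [ffun i => (a i - b i)%N].
Definition mi_le n (a b : mi n) : bool := [forall i, (a i <= b i)%N].
Definition mi_abs n (a : mi n) : nat := (\sum_(i < n) a i)%N.
Definition mi0 n : mi n := [ffun _ => 0%N].
Definition mi_unit n (j : 'I_n) : mi n := [ffun i => (i == j : nat)].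

Definition expo_add n (e f : expo n) : expo n :=
  (mi_add e.1.1 f.1.1, mi_add e.1.2 f.1.2, (e.2 + f.2)%N).
(* e <= f componentwise, i.e. f \in e + N^(2n+1) *)
Definition expo_le n (e f : expo n) : bool :=
  [&& mi_le e.1.1 f.1.1, mi_le e.1.2 f.1.2 & (e.2 <= f.2)%N].

(* Admissible orders on N^(2n) (pairs (alpha, beta) = monomial x^a xi^b),  *)
Definition admissible n (lt : mi n * mi n -> mi n * mi n -> bool) : Prop :=
  [/\ (forall a, ~~ lt a a),
      (forall a b c, lt a b -> lt b c -> lt a c),
      (forall a b, a <> b -> lt a b \/ lt b a),
      (forall a b c, lt a b ->
          lt (mi_add a.1 c.1, mi_add a.2 c.2) (mi_add b.1 c.1, mi_add b.2 c.2))
    & (forall i : 'I_n, lt (mi_unit i, mi0 n) (mi0 n, mi0 n) /\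
                        lt (mi0 n, mi0 n) (mi_unit i, mi_unit i))].

Definition hlt n (lt : mi n * mi n -> mi n * mi n -> bool) (e f : expo n) : bool :=
  ((mi_abs e.1.2 + e.2 < mi_abs f.1.2 + f.2)%N) ||
  ((mi_abs e.1.2 + e.2 == mi_abs f.1.2 + f.2)%N && lt e.1 f.1).

Definition hle n lt (e f : expo n) : bool := (e == f) || hlt lt e f.

Section Coef.
Variable C : idomainType.
Local Notation F := {fraction C}.
Local Notation "x %:F" := (@FracField.tofrac C x).

Definition prime_ideal (Q : pred C) : Prop :=
  [/\ 0 \in Q,
      (forall a b, a \in Q -> b \in Q -> a + b \in Q),
      (forall a b, b \in Q -> a * b \in Q),
      1 \notin Q
    & (forall a b, a * b \in Q -> (a \in Q) \/ (b \in Q))].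

Definition no_int_in_primes : Prop :=
  forall Q : pred C, prime_ideal Q -> forall m : int, m%:~R \in Q -> m = 0.

Definition locC (h : C) (f : F) : Prop :=
  exists (c : C) (l : nat), f = c%:F / (h ^+ l)%:F.
Definition locQ (Q : pred C) (h : C) (f : F) : Prop :=
  exists (c : C) (l : nat), c \in Q /\ f = c%:F / (h ^+ l)%:F.
Definition locCQ (Q : pred C) (f : F) : Prop :=
  exists c c' : C, c' \notin Q /\ f = c%:F / c'%:F.
Definition locQQ (Q : pred C) (f : F) : Prop :=
  exists c c' : C, [/\ c \in Q, c' \notin Q & f = c%:F / c'%:F].
End Coef.

(* Operators: P = sum c_{a b k} x^a d^b z^k, encoded by its coefficient    *)
(* function.  P lies in D_n(A)<z> iff all coefficients are in A and P is   *)
(* polynomial in (d, z) (finitely many (b,k) occur).                       *)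
Definition op (R : Type) (n : nat) := expo n -> R.

Definition Supp (R : nzRingType) n (P : op R n) : expo n -> Prop :=
  fun e => P e != 0.

Definition inD (R : nzRingType) n (A : R -> Prop) (P : op R n) : Prop :=
  (exists N : nat, forall e : expo n, P e != 0 -> (mi_abs e.1.2 + e.2 <= N)%N)
  /\ (forall e, A (P e)).

Definition op_sub (R : nzRingType) n (P Q : op R n) : op R n := fun e => P e - Q e.

(* Product in D_n(A)<z>, from  d^b x^g = sum_{m <= b} C(b,m) g^_m x^(g-m) z^|m| d^(b-m):
   coefficient of x^A d^D z^M in P*Q is the sum over (m, a, d, k) of
   P(a, D - d + m, k) * Q(A - a + m, d, M - k - |m|) * C(D-d+m, m) * (A-a+m)^_m
   with a <= A, d <= D, |m| + k <= M (all these indices are bounded). *)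
Definition bnd n (B : nat) := {ffun 'I_n -> 'I_B.+1}.
Definition bval n B (a : bnd n B) : mi n := [ffun i => nat_of_ord (a i)].

Definition mi_binom n (b m : mi n) : nat := (\prod_(i < n) 'C(b i, m i))%N.
Definition mi_ffact n (g m : mi n) : nat := (\prod_(i < n) (g i) ^_ (m i))%N.

Definition op_mul (R : nzRingType) n (P Q : op R n) : op R n :=
  fun e =>
  let A := e.1.1 in let D := e.1.2 in let M := e.2 in
  let B := (M + mi_abs A + mi_abs D)%N in
  \sum_(m : bnd n B) \sum_(a : bnd n B) \sum_(d : bnd n B) \sum_(k < M.+1)
    let mu := bval m in let al := bval a in let de := bval d in
    if [&& mi_le al A, mi_le de D & (mi_abs mu + k <= M)%N] then
      let be := mi_add (mi_sub D de) mu in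
      let ga := mi_add (mi_sub A al) mu in
      P (al, be, nat_of_ord k) * Q (ga, de, (M - k - mi_abs mu)%N)
        * (mi_binom be mu)%:R * (mi_ffact ga mu)%:R
    else 0.

Definition is_expmodQ (C : idomainType) n lt (Q : pred C) (P : op {fraction C} n)
    (e : expo n) : Prop :=
  ~ locQQ Q (P e) /\ (forall f, ~ locQQ Q (P f) -> hle lt f e).

Definition inDelta n r (es : 'I_r -> expo n) (j : 'I_r) (e : expo n) : Prop :=
  expo_le (es j) e /\ (forall k : 'I_r, (k < j)%N -> ~~ expo_le (es k) e).
Definition inDeltabar n r (es : 'I_r -> expo n) (e : expo n) : Prop :=
  forall k : 'I_r, ~~ expo_le (es k) e.

Definition division_data (C : idomainType) n r (Q : pred C) (h : C)
    (g : 'I_r -> op {fraction C} n) (es : 'I_r -> expo n)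
    (P : op {fraction C} n)
    (q : 'I_r -> op {fraction C} n) (R T : op {fraction C} n) : Prop :=
  [/\ (forall j, inD (fun _ => True) (q j)) /\ inD (fun _ => True) R
        /\ inD (fun _ => True) T,
      (forall e, P e = \sum_(j < r) op_mul (q j) (g j) e + R e + T e),
      (forall j : 'I_r, forall s, Supp (q j) s -> inDelta es j (expo_add s (es j))),
      (forall s, Supp R s -> inDeltabar es s)
    &
      [/\ (forall j, inD (locC h) (q j)), inD (locC h) R & inD (locQ Q h) T]].

(* Write < for the order <^h.  Modulo Q[h^-1], the coefficient of q_j g_j at an
   exponent e is the sum of the terms coming from exponents s with s + e_j > e,
   plus the leading term q_j(e - e_j) lc(g_j): every other term involves a
   coefficient of g_j in Q C_Q, hence in Q C_Q /\ C[h^-1] = Q[h^-1], because e_j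
   is the largest exponent of g_j outside Q C_Q and commuting d_i past x_i only
   raises exponents for <.  Since the numerator of lc(g_j) divides h, lc(g_j) is
   a unit of C[h^-1], so the coefficients of the q_j and of R are obtained by
   descending recursion on e.  The recursion is well founded because exponents
   of bounded degree carry no infinite <-ascending chain (Dickson's lemma and
   x_i < 1).  For uniqueness, the differences of two divisions form a division
   of an element of Q[h^-1]; at a <-maximal exponent where some difference is
   not in Q[h^-1], the same leading-term computation gives a contradiction. *)

From HB Require Import structures.
From mathcomp Require Import all_boot all_order all_algebra.
From mathcomp Require Import zify ring.
From Stdlib Require Import Classical ClassicalEpsilon.
Set Implicit Arguments. Unset Strict Implicit. Unset Printing Implicit Defensive.
Import GRing.Theory.

Section MultiIndex.
Variable n : nat.
Implicit Types a b c : mi n.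

Lemma mi_addC a b : mi_add a b = mi_add b a.
Proof. by apply/ffunP=> i; rewrite !ffunE addnC. Qed.

Lemma mi_add0 a : mi_add a (mi0 n) = a.
Proof. by apply/ffunP=> i; rewrite !ffunE addn0. Qed.

Lemma mi_0add a : mi_add (mi0 n) a = a.
Proof. by rewrite mi_addC mi_add0. Qed.

Lemma mi_abs_add a b : mi_abs (mi_add a b) = (mi_abs a + mi_abs b)%N.
Proof. by rewrite /mi_abs -big_split; apply: eq_bigr=> i _; rewrite ffunE. Qed.

Lemma mi_abs0 : mi_abs (mi0 n) = 0%N.
Proof. by rewrite /mi_abs big1 // => i _; rewrite ffunE. Qed.

Lemma mi_le_abs a i : (a i <= mi_abs a)%N.
Proof. by rewrite /mi_abs (bigD1 i) //= leq_addr. Qed.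

Lemma mi_abs_eq0 a : mi_abs a = 0%N -> a = mi0 n.
Proof.
by move=> a0; apply/ffunP=> i; rewrite ffunE; apply/eqP; rewrite -leqn0 -a0 mi_le_abs.
Qed.

Lemma mi_subK a b : mi_le b a -> mi_add (mi_sub a b) b = a.
Proof. by move=> /forallP ba; apply/ffunP=> i; rewrite !ffunE subnK. Qed.

Lemma mi_addK a b : mi_sub (mi_add a b) b = a.
Proof. by apply/ffunP=> i; rewrite !ffunE addnK. Qed.

Lemma mi_le_addl a b : mi_le b (mi_add a b).
Proof. by apply/forallP=> i; rewrite ffunE leq_addl. Qed.

Definition deg (e : expo n) := (mi_abs e.1.2 + e.2)%N.

Definition expo_sub (e f : expo n) : expo n :=
  (mi_sub e.1.1 f.1.1, mi_sub e.1.2 f.1.2, (e.2 - f.2)%N).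

Lemma deg_add (e f : expo n) : deg (expo_add e f) = (deg e + deg f)%N.
Proof. by rewrite /deg /= mi_abs_add; lia. Qed.

Lemma expo_addC (e f : expo n) : expo_add e f = expo_add f e.
Proof. by rewrite /expo_add mi_addC (mi_addC e.1.2) addnC. Qed.

Lemma expo_subK (e f : expo n) : expo_le f e -> expo_add (expo_sub e f) f = e.
Proof.
case: e f => [[a b] k] [[a' b'] k'] /and3P[/= le_a le_b le_k].
by rewrite /expo_add /expo_sub /= !mi_subK // subnK.
Qed.

Lemma expo_addK (e f : expo n) : expo_sub (expo_add e f) f = e.
Proof. by case: e f => [[a b] k] [[a' b'] k']; rewrite /expo_sub /= !mi_addK addnK. Qed.

Lemma expo_le_add (e f : expo n) : expo_le f (expo_add e f).
Proof. by rewrite /expo_le /= !mi_le_addl leq_addl. Qed.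

Definition shift (e : expo n) (mu : mi n) : expo n :=
  (mi_add e.1.1 mu, mi_add e.1.2 mu, (e.2 - mi_abs mu)%N).

Lemma shift0 e : shift e (mi0 n) = e.
Proof. by case: e => [[a b] k]; rewrite /shift /= !mi_add0 mi_abs0 subn0. Qed.

Lemma deg_shift e mu : (mi_abs mu <= e.2)%N -> deg (shift e mu) = deg e.
Proof. by rewrite /deg /shift /= mi_abs_add; lia. Qed.

Lemma mi_ind (P : mi n -> Prop) :
    (forall i, P (mi_unit i)) -> (forall a b, P a -> P b -> P (mi_add a b)) ->
  forall a, a <> mi0 n -> P a.
Proof.
move=> Punit PD a; move: {2}(mi_abs a) (erefl (mi_abs a)) => k.
elim: k a => [|k IH] a abs_a a_neq0; first by case: a_neq0; apply: mi_abs_eq0.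
have [i a_i_gt0|all0] := pickP (fun i => 0 < a i)%N; last first.
  case: a_neq0; apply/ffunP=> i; rewrite ffunE.
  by move: (all0 i); rewrite /= lt0n => /negbFE/eqP.
have le_ui : mi_le (mi_unit i) a.
  by apply/forallP=> j; rewrite ffunE; case: eqP => [->|].
have abs_ui : mi_abs (mi_unit i) = 1%N.
  by rewrite /mi_abs (bigD1 i) //= big1 ?ffunE ?eqxx // => j /negbTE ji; rewrite ffunE ji.
rewrite -(mi_subK le_ui).
have [->|/eqP ne0] := eqVneq (mi_sub a (mi_unit i)) (mi0 n); first by rewrite mi_0add.
apply: PD (Punit i); apply: IH ne0.
by have := f_equal (@mi_abs n) (mi_subK le_ui); rewrite mi_abs_add abs_a abs_ui; lia.
Qed.

End MultiIndex.

Section AdmissibleOrder.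
Variable n : nat.
Variable lt : mi n * mi n -> mi n * mi n -> bool.
Hypothesis adm : admissible lt.

Local Notation padd a b := (mi_add a.1 b.1, mi_add a.2 b.2).

Lemma lt_irr a : ~~ lt a a. Proof. by case: adm. Qed.

Lemma lt_trans a b c : lt a b -> lt b c -> lt a c.
Proof. by case: adm => _ + _ _ _; apply. Qed.

Lemma lt_total a b : a <> b -> lt a b \/ lt b a.
Proof. by case: adm => _ _ + _ _; apply. Qed.

Lemma lt_add2r c a b : lt a b -> lt (padd a c) (padd b c).
Proof. by case: adm => _ _ _ + _; apply. Qed.

Lemma lt0_diag mu : mu <> mi0 n -> lt (mi0 n, mi0 n) (mu, mu).
Proof.
move: mu; apply: mi_ind => [i|a b lt_a lt_b]; first by case: adm => _ _ _ _ /(_ i)[].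
apply: lt_trans lt_b _.
by have := lt_add2r (b, b) lt_a; rewrite /= !mi_0add (mi_addC a).
Qed.

Lemma lt_x0 g : g <> mi0 n -> lt (g, mi0 n) (mi0 n, mi0 n).
Proof.
move: g; apply: mi_ind => [i|a b lt_a lt_b]; first by case: adm => _ _ _ _ /(_ i)[].
apply: lt_trans _ lt_b.
by have := lt_add2r (b, mi0 n) lt_a; rewrite /= !mi_0add (mi_addC a).
Qed.

Local Notation hlt := (hlt lt).
Local Notation hle := (hle lt).

Lemma hlt_irr e : ~~ hlt e e.
Proof. by rewrite /hlt ltnn eqxx /= lt_irr. Qed.

Lemma hlt_deg e f : hlt e f -> (deg e <= deg f)%N.
Proof. by rewrite /hlt /deg => /orP[/ltnW|/andP[/eqP-> _]]. Qed.

Lemma hlt_trans e f g : hlt e f -> hlt f g -> hlt e g.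
Proof.
rewrite /hlt => /orP[ef|/andP[/eqP ef_deg ef]] /orP[fg|/andP[/eqP fg_deg fg]].
- by rewrite (ltn_trans ef fg).
- by rewrite -fg_deg ef.
- by rewrite ef_deg fg.
- by rewrite ef_deg fg_deg eqxx (lt_trans ef fg) orbT.
Qed.

Lemma hlt_total e f : e <> f -> hlt e f \/ hlt f e.
Proof.
move=> e_neq_f; rewrite /hlt.
case: (ltngtP (mi_abs e.1.2 + e.2) (mi_abs f.1.2 + f.2)) => [||deg_ef]; [by left|by right|].
have [e1_eq|/eqP] := eqVneq e.1 f.1; last exact: lt_total.
case: e_neq_f; move: deg_ef; rewrite e1_eq.
by case: e f e1_eq => [[a b] k] [[a' b'] k'] /= [-> ->] ?; congr (_, _); lia.
Qed.

Lemma hle_hlt_trans e f g : hle e f -> hlt f g -> hlt e g.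
Proof. by case/orP=> [/eqP->|ef] // /(hlt_trans ef). Qed.

Lemma hle_trans e f g : hle e f -> hle f g -> hle e g.
Proof. by move=> ef /orP[/eqP<-//|fg]; rewrite /hle (hle_hlt_trans ef fg) orbT. Qed.

Lemma hle_anti e f : hle e f -> hle f e -> e = f.
Proof.
case/orP=> [/eqP//|ef] /orP[/eqP//|fe].
by have := hlt_irr e; rewrite (hlt_trans ef fe).
Qed.

Lemma hltNge e f : ~~ hlt e f -> hle f e.
Proof.
rewrite /hle; have [//|/eqP fe /= ef] := eqVneq f e.
by case: (hlt_total fe) => //; rewrite (negbTE ef).
Qed.

Lemma hlt_add2r c e f : hlt e f -> hlt (expo_add e c) (expo_add f c).
Proof.
rewrite /hlt /= !mi_abs_add => /orP[deg_ef|/andP[/eqP deg_ef ef]].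
  by apply/orP; left; lia.
by apply/orP; right; rewrite (lt_add2r c.1 ef) andbT; apply/eqP; lia.
Qed.

Lemma hle_add2r c e f : hle e f -> hle (expo_add e c) (expo_add f c).
Proof. by case/orP=> [/eqP->|ef]; rewrite /hle ?eqxx // (hlt_add2r c ef) orbT. Qed.

Lemma hlt_shift e mu : (mi_abs mu <= e.2)%N -> mu <> mi0 n -> hlt e (shift e mu).
Proof.
move=> mu_le mu_neq0; apply/orP; right.
rewrite -[X in (X == _)%N]/(deg e) -[X in (_ == X)%N]/(deg (shift e mu)) deg_shift // eqxx.
have := lt_add2r e.1 (lt0_diag mu_neq0); rewrite /= !mi_0add (mi_addC mu) (mi_addC mu).
by case: e {mu_le} => [[a b] k].
Qed.

Lemma hle_shift e mu : (mi_abs mu <= e.2)%N -> hle e (shift e mu).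
Proof.
move=> mu_le; have [->|/eqP mu_neq0] := eqVneq mu (mi0 n); first by rewrite shift0 /hle eqxx.
by rewrite /hle (hlt_shift mu_le mu_neq0) orbT.
Qed.

Lemma hle_addx e g : hle (mi_add e.1.1 g, e.1.2, e.2) e.
Proof.
have [->|/eqP g_neq0] := eqVneq g (mi0 n).
  by rewrite mi_add0 /hle; case: e => [[a b] k]; rewrite eqxx.
rewrite /hle /hlt /= eqxx ltnn /=; apply/orP; right.
have := lt_add2r e.1 (lt_x0 g_neq0); rewrite /= !mi_0add (mi_addC g).
by case: e => [[a b] k].
Qed.

End AdmissibleOrder.

Lemma exists_min_after (u : nat -> nat) p :
  exists i, (p < i)%N /\ forall j, (p < j)%N -> (u i <= u j)%N.
Proof.
suff: forall v, (exists2 j, (p < j)%N & u j = v) ->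
    exists i, (p < i)%N /\ forall j, (p < j)%N -> (u i <= u j)%N.
  by apply; exists p.+1.
elim/ltn_ind => v IH [j0 p_lt_j0 u_j0].
have [[j p_lt_j u_j_lt]|no_less] := classic (exists2 j, (p < j)%N & (u j < v)%N).
  by apply: (IH (u j)) => //; exists j.
exists j0; split=> // j p_lt_j; rewrite u_j0 leqNgt; apply/negP=> u_j_lt.
by apply: no_less; exists j.
Qed.

Lemma nondecreasing_subseq (u : nat -> nat) :
  exists psi : nat -> nat,
    (forall k, psi k < psi k.+1)%N /\ (forall k, u (psi k) <= u (psi k.+1))%N.
Proof.
pose next p := proj1_sig (constructive_indefinite_description _ (exists_min_after u p)).
have next_gt p : (p < next p)%N.
  by rewrite /next; case: constructive_indefinite_description => ? [].
have next_min p j : (p < j)%N -> (u (next p) <= u j)%N.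
  by rewrite /next; case: constructive_indefinite_description => i /= [_]; apply.
exists (fun k => iter k.+1 next 0%N); split=> k; first exact: next_gt.
by apply: next_min; apply: ltn_trans (next_gt _) (next_gt _).
Qed.

Lemma dickson (X : Type) (I : eqType) (c : I -> X -> nat) (s : seq I) (f : nat -> X) :
  exists psi : nat -> nat, {homo psi : a b / (a < b)%N} /\
    forall i, i \in s -> {homo (fun k => c i (f (psi k))) : a b / (a <= b)%N}.
Proof.
elim: s => [|i0 s [psi [psi_incr c_mono]]].
  by exists id; split=> // i; rewrite in_nil.
have [phi [phi_incr c_i0_mono]] := nondecreasing_subseq (fun k => c i0 (f (psi k))).
exists (psi \o phi); split.
  by move=> a b /(homo_ltn ltn_trans phi_incr); apply: psi_incr.
move=> i; rewrite inE => /predU1P[->|i_s] a b ab.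
  exact: (homo_leq leqnn leq_trans c_i0_mono).
apply: c_mono => //; exact: (homo_leq leqnn leq_trans (fun k => ltnW (phi_incr k))).
Qed.

Lemma wf_no_descending_chain (T : Type) (R : T -> T -> Prop) :
  (forall f : nat -> T, ~ (forall k, R (f k.+1) (f k))) -> well_founded R.
Proof.
move=> no_chain x; apply: NNPP => not_acc_x.
have step (y : {y | ~ Acc R y}) : {z : {z | ~ Acc R z} | R (sval z) (sval y)}.
  case: y => y not_acc_y; apply: constructive_indefinite_description.
  apply: NNPP => no_z; apply: (not_acc_y); constructor => z Rzy.
  by apply: NNPP => not_acc_z; apply: no_z; exists (exist _ z not_acc_z).
pose f k := sval (iter k (fun y => sval (step y)) (exist _ x not_acc_x)).
by apply: (no_chain f) => k; exact: svalP (step _).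
Qed.

Section BoundedDegree.
Variable n : nat.
Variable lt : mi n * mi n -> mi n * mi n -> bool.
Hypothesis adm : admissible lt.

Definition above N (y x : expo n) := hlt lt x y /\ (deg y <= N)%N.

(* If deg e, deg f <= N and every coordinate of e is at most that of f, then
   f = x^g e for some g: the coordinates N - beta_j and N - k pin beta and k. *)
Definition coord N (i : ('I_n * 'I_3) + bool) (e : expo n) : nat :=
  match i with
  | inl (j, t) => match nat_of_ord t with
                  | 0 => e.1.1 j | 1 => e.1.2 j | _ => N - e.1.2 j end
  | inr b => if b then e.2 else N - e.2
  end.

Lemma wf_above N : well_founded (above N).
Proof.
apply: wf_no_descending_chain => f chain.
have f_incr : {homo (fun k => f k.+1) : a b / (a < b)%N >-> hlt lt a b}.
  by apply: homo_ltn => [? ? ?|k]; [apply: hlt_trans | case: (chain k.+1)].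
have deg_f k : (deg (f k.+1) <= N)%N by case: (chain k).
have [psi [psi_incr coord_mono]] :=
  dickson (coord N) (enum {: ('I_n * 'I_3) + bool}) (fun k => f k.+1).
set a := f (psi 0%N).+1; set b := f (psi 1%N).+1.
have ab : hlt lt a b by apply: f_incr; apply: psi_incr.
have le_coord i : (coord N i a <= coord N i b)%N by apply: coord_mono; rewrite ?mem_enum.
have := deg_f (psi 0%N); have := deg_f (psi 1%N); rewrite -/a -/b /deg => deg_b deg_a.
have eq_beta : b.1.2 = a.1.2.
  apply/ffunP=> j; have := le_coord (inl (j, Ordinal (isT : 1 < 3)%N)).
  have := le_coord (inl (j, Ordinal (isT : 2 < 3)%N)).
  by have := mi_le_abs a.1.2 j; have := mi_le_abs b.1.2 j; rewrite /=; lia.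
have eq_k : b.2 = a.2.
  by have := le_coord (inr true); have := le_coord (inr false); rewrite /=; lia.
have le_alpha : mi_le a.1.1 b.1.1.
  by apply/forallP=> j; have := le_coord (inl (j, Ordinal (isT : 0 < 3)%N)).
have b_eq : b = (mi_add a.1.1 (mi_sub b.1.1 a.1.1), a.1.2, a.2).
  by rewrite mi_addC mi_subK // -eq_beta -eq_k; case: (b) => [[? ?] ?].
have := hle_addx adm a (mi_sub b.1.1 a.1.1); rewrite -b_eq => ba.
by have := hlt_irr adm b; rewrite (hle_hlt_trans adm ba ab).
Qed.

Lemma exists_hmax N (S : expo n -> Prop) :
    (forall e, S e -> (deg e <= N)%N) -> forall e0, S e0 ->
  exists e, S e /\ forall f, S f -> ~~ hlt lt e f.
Proof.
move=> S_deg e0; elim/(well_founded_ind (wf_above N)): e0 => e IH Se.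
have [[f [Sf ef]]|no_above] := classic (exists f, S f /\ hlt lt e f).
  by apply: (IH f) => //; split=> //; apply: S_deg.
exists e; split=> // f Sf; apply/negP=> ef; apply: no_above; by exists f.
Qed.

End BoundedDegree.

Local Open Scope ring_scope.

Lemma sum4_single (R : nmodType) (I1 I2 I3 I4 : finType) (F : I1 -> I2 -> I3 -> I4 -> R)
    x1 x2 x3 x4 :
    (forall y1 y2 y3 y4, F y1 y2 y3 y4 != 0 -> [/\ y1 = x1, y2 = x2, y3 = x3 & y4 = x4]) ->
  \sum_y1 \sum_y2 \sum_y3 \sum_y4 F y1 y2 y3 y4 = F x1 x2 x3 x4.
Proof.
move=> F_supp.
have F0 y1 y2 y3 y4 : ~ [/\ y1 = x1, y2 = x2, y3 = x3 & y4 = x4] -> F y1 y2 y3 y4 = 0.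
  by move=> not_x; apply/eqP/negPn/negP => /F_supp.
have sum1 (I : finType) (G : I -> R) x : (forall y, y != x -> G y = 0) -> \sum_y G y = G x.
  by move=> G0; rewrite (bigD1 x) //= big1 ?addr0.
rewrite (sum1 _ _ x1) => [|y1 /eqP y1x]; last first.
  by do 3!apply: big1 => ? _; apply: F0 => -[].
rewrite (sum1 _ _ x2) => [|y2 /eqP y2x]; last first.
  by do 2!apply: big1 => ? _; apply: F0 => -[].
rewrite (sum1 _ _ x3) => [|y3 /eqP y3x]; last by apply: big1 => ? _; apply: F0 => -[].
by rewrite (sum1 _ _ x4) // => y4 /eqP y4x; apply: F0 => -[].
Qed.

Section ProductExpansion.
Variable R : nzRingType.
Variable n : nat.
Implicit Types (Phi : expo n -> expo n -> mi n -> R) (e s t : expo n) (mu : mi n).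

(* op_mul with its summand P s * Q t abstracted, so that products can be split
   term by term. *)
Definition op_conv Phi e : R :=
  let A := e.1.1 in let D := e.1.2 in let M := e.2 in
  let B := (M + mi_abs A + mi_abs D)%N in
  \sum_(m : bnd n B) \sum_(a : bnd n B) \sum_(d : bnd n B) \sum_(k < M.+1)
    let mu := bval m in let al := bval a in let de := bval d in
    if [&& mi_le al A, mi_le de D & (mi_abs mu + k <= M)%N] then
      let be := mi_add (mi_sub D de) mu in
      let ga := mi_add (mi_sub A al) mu in
      Phi (al, be, nat_of_ord k) (ga, de, (M - k - mi_abs mu)%N) mu
        * (mi_binom be mu)%:R * (mi_ffact ga mu)%:R
    else 0.

Lemma op_mulE (P Q : op R n) e : op_mul P Q e = op_conv (fun s t _ => P s * Q t) e.
Proof. by []. Qed.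

(* The monomials of exponents s and t multiply to one containing x^A d^D z^M,
   e = (A, D, M), after mu_i commutations of d_i past x_i, each trading
   x_i d_i for z. *)
Definition contributes e s t mu := expo_add s t = shift e mu /\ (mi_abs mu <= e.2)%N.

Lemma contributes_term e mu al de (k : nat) :
    [&& mi_le al e.1.1, mi_le de e.1.2 & (mi_abs mu + k <= e.2)%N] ->
  contributes e (al, mi_add (mi_sub e.1.2 de) mu, k)
                (mi_add (mi_sub e.1.1 al) mu, de, (e.2 - k - mi_abs mu)%N) mu.
Proof.
case/and3P=> /forallP le_al /forallP le_de le_k; split; last by lia.
rewrite /expo_add /shift /=; congr (_, _, _); last by lia.
- by apply/ffunP=> i; rewrite !ffunE; have := le_al i; lia.
- by apply/ffunP=> i; rewrite !ffunE; have := le_de i; lia.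
Qed.

Lemma eq_op_conv Phi1 Phi2 e :
    (forall s t mu, contributes e s t mu -> Phi1 s t mu = Phi2 s t mu) ->
  op_conv Phi1 e = op_conv Phi2 e.
Proof.
move=> eq_Phi; do 4!apply: eq_bigr => ? _.
by rewrite /=; case: ifP => // /contributes_term/eq_Phi->.
Qed.

Lemma op_convD Phi1 Phi2 e :
  op_conv (fun s t mu => Phi1 s t mu + Phi2 s t mu) e = op_conv Phi1 e + op_conv Phi2 e.
Proof.
rewrite /op_conv -big_split; apply: eq_bigr=> m _; rewrite -big_split; apply: eq_bigr=> a _.
rewrite -big_split; apply: eq_bigr=> d _; rewrite -big_split; apply: eq_bigr=> k _ /=.
by case: ifP; rewrite ?addr0 // => _; rewrite !mulrDl.
Qed.

Lemma op_convB Phi1 Phi2 e :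
  op_conv (fun s t mu => Phi1 s t mu - Phi2 s t mu) e = op_conv Phi1 e - op_conv Phi2 e.
Proof.
rewrite /op_conv -sumrB; apply: eq_bigr=> m _; rewrite -sumrB; apply: eq_bigr=> a _.
rewrite -sumrB; apply: eq_bigr=> d _; rewrite -sumrB; apply: eq_bigr=> k _ /=.
by case: ifP; rewrite ?subr0 // => _; rewrite !mulrBl.
Qed.

Lemma op_mul_subl (P P' G : op R n) e :
  op_mul (op_sub P P') G e = op_mul P G e - op_mul P' G e.
Proof. by rewrite !op_mulE -op_convB; apply: eq_op_conv => s t mu _; rewrite mulrBl. Qed.

Lemma op_sub_neq0 (P P' : op R n) e : op_sub P P' e != 0 -> P e != 0 \/ P' e != 0.
Proof.
rewrite /op_sub; have [P0|] := eqVneq (P e) 0; last by left.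
by rewrite P0 sub0r oppr_eq0; right.
Qed.

Lemma op_conv_ind (S : R -> Prop) Phi e :
    S 0 -> (forall x y, S x -> S y -> S (x + y)) -> (forall x k, S x -> S (x * k%:R)) ->
    (forall s t mu, contributes e s t mu -> S (Phi s t mu)) ->
  S (op_conv Phi e).
Proof.
move=> S0 SD SM S_Phi; do 4!apply: big_ind => // ? _.
by rewrite /=; case: ifP => // /contributes_term/S_Phi/SM/SM.
Qed.

Lemma op_conv_eq0 Phi e :
  (forall s t mu, contributes e s t mu -> Phi s t mu = 0) -> op_conv Phi e = 0.
Proof.
move=> Phi0; apply: (@op_conv_ind (eq^~ 0)) => // [x y -> ->|x k ->].
  by rewrite addr0.
by rewrite mul0r.
Qed.

Lemma bval_inj B : injective (@bval n B).
Proof.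
move=> a b /ffunP ab; apply/ffunP=> i; apply: val_inj.
by have := ab i; rewrite !ffunE.
Qed.

Lemma bval_inord B (v : mi n) : (forall i, v i <= B)%N ->
  bval ([ffun i => inord (v i)] : bnd n B) = v.
Proof. by move=> v_le; apply/ffunP=> i; rewrite !ffunE inordK // ltnS. Qed.

Lemma op_conv_single Phi e s0 t0 :
    expo_add s0 t0 = e ->
    (forall s t mu, contributes e s t mu -> Phi s t mu != 0 ->
       [/\ mu = mi0 n, s = s0 & t = t0]) ->
  op_conv Phi e = Phi s0 t0 (mi0 n).
Proof.
case: e => [[A D] M] st0 Phi_supp; case: st0 Phi_supp.
case: s0 t0 => [[a0 b0] k0] [[g0 d0] l0] <- <- <- Phi_supp.
rewrite /op_conv /=; set B := (_ + _ + _)%N.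
have a0_le i : (a0 i <= B)%N.
  by have := mi_le_abs (mi_add a0 g0) i; rewrite ffunE /B; lia.
have d0_le i : (d0 i <= B)%N.
  by have := mi_le_abs (mi_add b0 d0) i; rewrite ffunE /B; lia.
have mi0_le i : (mi0 n i <= B)%N by rewrite ffunE.
pose bnd_of v : bnd n B := [ffun i => inord (v i)].
have k0_lt : (k0 < (k0 + l0).+1)%N by rewrite ltnS leq_addr.
rewrite (sum4_single (x1 := bnd_of (mi0 n)) (x2 := bnd_of a0) (x3 := bnd_of d0)
                     (x4 := Ordinal k0_lt)) /=.
  rewrite !bval_inord //.
  have -> : [&& mi_le a0 (mi_add a0 g0), mi_le d0 (mi_add b0 d0)
              & (mi_abs (mi0 n) + k0 <= k0 + l0)%N].
    by rewrite mi_le_addl mi_addC mi_le_addl mi_abs0 leq_addr.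
  rewrite !mi_add0 mi_addK (mi_addC a0) mi_addK mi_abs0 subn0 addKn.
  rewrite /mi_binom /mi_ffact !big1 ?mulr1 // => i _; rewrite ffunE.
    by rewrite ffactn0.
  by rewrite bin0.
move=> m a d k /=; case: ifP => [term|_]; last by rewrite eqxx.
move=> /eqP Phi_term.
have /Phi_supp := contributes_term (e := (mi_add a0 g0, mi_add b0 d0, k0 + l0)%N) term.
case=> [|mu0 [a_eq _ k_eq] [_ d_eq _]].
  by apply/eqP=> Phi0; apply: Phi_term; rewrite Phi0 !mul0r.
split; last by apply: val_inj; rewrite /= k_eq.
- by apply: bval_inj; rewrite mu0 bval_inord.
- by apply: bval_inj; rewrite a_eq bval_inord.
- by apply: bval_inj; rewrite d_eq bval_inord.
Qed.

End ProductExpansion.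

Section Localization.
Variable C : idomainType.
Local Notation F := {fraction C}.
Local Notation "x %:F" := (@FracField.tofrac C x).
Variable h : C.
Hypothesis h_neq0 : h != 0.

Lemma tofrac_hX_neq0 l : (h ^+ l)%:F != 0.
Proof. by rewrite tofrac_eq0 expf_neq0. Qed.

Lemma locC0 : locC h 0.
Proof. by exists 0, 0%N; rewrite tofrac0 mul0r. Qed.

Lemma locC_nat k : locC h k%:R.
Proof. by exists k%:R, 0%N; rewrite expr0 tofrac1 divr1 rmorph_nat. Qed.

Lemma locC_add x y : locC h x -> locC h y -> locC h (x + y).
Proof.
move=> [c1 [l1 ->]] [c2 [l2 ->]]; exists (c1 * h ^+ l2 + c2 * h ^+ l1), (l1 + l2)%N.
by rewrite exprD addf_div ?tofrac_hX_neq0 // !tofracD !tofracM mulrC.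
Qed.

Lemma locC_opp x : locC h x -> locC h (- x).
Proof. by move=> [c [l ->]]; exists (- c), l; rewrite tofracN mulNr. Qed.

Lemma locC_sub x y : locC h x -> locC h y -> locC h (x - y).
Proof. by move=> Cx /locC_opp; apply: locC_add. Qed.

Lemma locC_mul x y : locC h x -> locC h y -> locC h (x * y).
Proof.
move=> [c1 [l1 ->]] [c2 [l2 ->]]; exists (c1 * c2), (l1 + l2)%N.
by rewrite exprD mulf_div !tofracM.
Qed.

Lemma locC_sum (I : finType) (f : I -> F) : (forall i, locC h (f i)) -> locC h (\sum_i f i).
Proof. by move=> Cf; apply: big_ind => //; [apply: locC0 | apply: locC_add]. Qed.

Lemma locC_conv n (Phi : expo n -> expo n -> mi n -> F) e :
  (forall s t mu, contributes e s t mu -> locC h (Phi s t mu)) -> locC h (op_conv Phi e).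
Proof.
apply: (op_conv_ind (S := locC h)); [exact: locC0 | exact: locC_add |].
by move=> x k Cx; apply: locC_mul Cx (locC_nat k).
Qed.

End Localization.

Section LocalizationModQ.
Variable C : idomainType.
Local Notation F := {fraction C}.
Local Notation "x %:F" := (@FracField.tofrac C x).
Variable Q : pred C.
Hypothesis pQ : prime_ideal Q.
Variable h : C.
Hypothesis hQ : h \notin Q.

Lemma notin_prime_neq0 a : a \notin Q -> a != 0.
Proof. by apply: contra => /eqP->; case: pQ. Qed.

Let h_neq0 : h != 0 := notin_prime_neq0 hQ.

Lemma prime_idealM a b : b \in Q -> a * b \in Q.
Proof. by case: pQ => _ _ + _ _; apply. Qed.

Lemma locQ0 : locQ Q h 0.
Proof. by exists 0, 0%N; rewrite tofrac0 mul0r; split=> //; case: pQ. Qed.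

Lemma locQ_add x y : locQ Q h x -> locQ Q h y -> locQ Q h (x + y).
Proof.
move=> [c1 [l1 [Qc1 ->]]] [c2 [l2 [Qc2 ->]]].
exists (c1 * h ^+ l2 + c2 * h ^+ l1), (l1 + l2)%N; split.
  by case: pQ => _ QD _ _ _; apply: QD; rewrite mulrC prime_idealM.
by rewrite exprD addf_div ?tofrac_hX_neq0 // !tofracD !tofracM mulrC.
Qed.

Lemma locQ_opp x : locQ Q h x -> locQ Q h (- x).
Proof.
move=> [c [l [Qc ->]]]; exists (- c), l.
by rewrite -mulN1r prime_idealM // tofracM tofracN tofrac1 mulN1r mulNr.
Qed.

Lemma locQ_sub x y : locQ Q h x -> locQ Q h y -> locQ Q h (x - y).
Proof. by move=> Qx /locQ_opp; apply: locQ_add. Qed.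

Lemma locQ_mull x y : locC h x -> locQ Q h y -> locQ Q h (x * y).
Proof.
move=> [c1 [l1 ->]] [c2 [l2 [Qc2 ->]]]; exists (c1 * c2), (l1 + l2)%N.
by rewrite prime_idealM // exprD mulf_div !tofracM.
Qed.

Lemma locQ_mulr x y : locQ Q h x -> locC h y -> locQ Q h (x * y).
Proof. by move=> Qx Cy; rewrite mulrC; apply: locQ_mull. Qed.

Lemma locQ_sum (I : finType) (f : I -> F) :
  (forall i, locQ Q h (f i)) -> locQ Q h (\sum_i f i).
Proof. by move=> Qf; apply: big_ind => //; [apply: locQ0 | apply: locQ_add]. Qed.

Lemma locQ_conv n (Phi : expo n -> expo n -> mi n -> F) e :
    (forall s t mu, contributes e s t mu -> locQ Q h (Phi s t mu)) ->
  locQ Q h (op_conv Phi e).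
Proof.
apply: (op_conv_ind (S := locQ Q h)); [exact: locQ0 | exact: locQ_add |].
by move=> x k Qx; apply: locQ_mulr Qx (locC_nat h k).
Qed.

Lemma locC_locQQ x : locC h x -> locQQ Q x -> locQ Q h x.
Proof.
move=> [c [l ->]] [a [a' [Qa a'Q]]] /eqP.
rewrite eqr_div ?tofrac_hX_neq0 ?tofrac_eq0 ?notin_prime_neq0 // -!tofracM tofrac_eq.
move=> /eqP ca'_eq; exists c, l; split=> //.
have : c * a' \in Q by rewrite ca'_eq mulrC prime_idealM.
by case: pQ => _ _ _ _ /[apply] -[] // a'_in; rewrite a'_in in a'Q.
Qed.

Lemma locC_inv_dvd x c c' d :
    c' \notin Q -> ~ locQQ Q x -> x = c%:F / c'%:F -> h = c * d -> locC h x^-1.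
Proof.
move=> c'Q x_nQ x_eq h_eq.
have cQ : c \notin Q by apply/negP=> Qc; apply: x_nQ; exists c, c'.
have d_neq0 : d != 0 by move: h_neq0; rewrite h_eq mulf_eq0 negb_or => /andP[].
exists (c' * d), 1%N; rewrite x_eq expr1 h_eq !tofracM invf_div -mulf_div.
by rewrite divff ?tofrac_eq0 ?mulr1.
Qed.

End LocalizationModQ.

Lemma exists_wf_fixpoint (T U : Type) (u0 : U) (R : T -> T -> Prop) (wfR : well_founded R)
    (step : (T -> U) -> T -> U) :
    (forall v1 v2 x, (forall y, R y x -> v1 y = v2 y) -> step v1 x = step v2 x) ->
  exists v, forall x, v x = step v x.
Proof.
move=> step_local.
pose restrict x (rec : forall y, R y x -> U) y :=
  if excluded_middle_informative (R y x) is left Ryx then rec y Ryx else u0.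
exists (Fix wfR (fun _ => U) (fun x rec => step (restrict x rec) x)) => x.
rewrite Fix_eq => [|y rec1 rec2 eq_rec]; apply: step_local => z Rz; rewrite /restrict;
  by case: excluded_middle_informative.
Qed.

Definition deg_bounded (R : nzRingType) n (P : op R n) :=
  exists N, forall e, P e != 0 -> (deg e <= N)%N.

Lemma deg_bounded_family (R : nzRingType) n (I : finType) (P : I -> op R n) :
  (forall i, deg_bounded (P i)) -> exists N, forall i e, P i e != 0 -> (deg e <= N)%N.
Proof.
move=> P_deg; have [N P_le] := fin_all_exists P_deg.
by exists (\max_i N i) => i e /P_le /leq_trans; apply; apply: leq_bigmax.
Qed.

Lemma deg_bounded_sub (R : nzRingType) n (P P' : op R n) :
  deg_bounded P -> deg_bounded P' -> deg_bounded (op_sub P P').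
Proof.
move=> [N P_le] [N' P'_le]; exists (N + N')%N => e; rewrite /op_sub.
have [P0|/P_le] := eqVneq (P e) 0; last by move=> ? _; lia.
by rewrite P0 sub0r oppr_eq0 => /P'_le; lia.
Qed.

Section Division.
Variable C : idomainType.
Local Notation F := {fraction C}.
Variables (n : nat) (lt : mi n * mi n -> mi n * mi n -> bool) (Q : pred C) (h : C).
Variables (r : nat) (g : 'I_r -> op F n) (es : 'I_r -> expo n).
Hypothesis adm : admissible lt.
Hypothesis pQ : prime_ideal Q.
Hypothesis hQ : h \notin Q.
Hypothesis g_inD : forall j, inD (locC h) (g j).
Hypothesis g_exp : forall j, is_expmodQ lt Q (g j) (es j).
Hypothesis lc_inv_locC : forall j, locC h (g j (es j))^-1.

Local Notation hlt := (hlt lt).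
Local Notation hle := (hle lt).
Local Notation LC := (locC h).
Local Notation LQ := (locQ Q h).

Let h_neq0 : h != 0 := notin_prime_neq0 pQ hQ.

Lemma g_locC j t : LC (g j t). Proof. exact: (g_inD j).2. Qed.

Lemma lc_neq0 j : g j (es j) != 0.
Proof.
have [lc_nQ _] := g_exp j; apply/eqP=> lc0; apply: lc_nQ; rewrite lc0.
by exists 0, 1; rewrite tofrac0 mul0r; case: pQ.
Qed.

Lemma lead_term j e s t mu :
    contributes e s t mu -> ~~ hlt e (expo_add s (es j)) -> ~ locQQ Q (g j t) ->
  [/\ mu = mi0 n, t = es j & expo_add s (es j) = e].
Proof.
move=> [st_eq mu_le] not_above t_nQ.
have t_le : hle t (es j) by have [_] := g_exp j; apply.
have e_le_st : hle e (expo_add s t) by rewrite st_eq; apply: hle_shift.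
have st_le : hle (expo_add s t) (expo_add s (es j)).
  by rewrite !(expo_addC s); apply: hle_add2r.
have sej_e := hle_anti adm (hltNge adm not_above) (hle_trans adm e_le_st st_le).
have st_le_e : hle (expo_add s t) e by rewrite -[X in hle _ X]sej_e.
have e_st := hle_anti adm e_le_st st_le_e.
split=> //.
  apply: NNPP => /(hlt_shift adm mu_le); rewrite -st_eq -e_st.
  by rewrite (negbTE (hlt_irr adm e)).
case/orP: t_le => [/eqP//|/(hlt_add2r adm s)]; rewrite !(expo_addC _ s) -e_st sej_e.
by rewrite (negbTE (hlt_irr adm e)).
Qed.

Definition mul_above (q : op F n) j e :=
  op_conv (fun s t _ => if hlt e (expo_add s (es j)) then q s * g j t else 0) e.

Definition mul_lead (q : op F n) j e :=
  if expo_le (es j) e then q (expo_sub e (es j)) * g j (es j) else 0.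

Lemma op_mul_lead_modQ (q : op F n) j e : (forall s, LC (q s)) ->
  LQ (op_mul q (g j) e - mul_above q j e - mul_lead q j e).
Proof.
move=> q_loc; set ej := es j.
pose lead s t mu := [&& expo_add s ej == e, mu == mi0 n & t == ej].
pose below s := ~~ hlt e (expo_add s ej).
have -> : op_mul q (g j) e - mul_above q j e =
    op_conv (fun s t mu => if below s && lead s t mu then q s * g j t else 0) e +
    op_conv (fun s t mu => if below s && ~~ lead s t mu then q s * g j t else 0) e.
  rewrite op_mulE -op_convB -op_convD; apply: eq_op_conv => s t mu _.
  by rewrite /below; case: hlt; case: lead; rewrite /= ?subrr ?subr0 ?addr0 ?add0r.
have -> : op_conv (fun s t mu => if below s && lead s t mu then q s * g j t else 0) e =
    mul_lead q j e.
  rewrite /mul_lead -/ej; case: ifP => [ej_le|ej_nle]; last first.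
    apply: op_conv_eq0 => s t mu _; case: ifP => // /andP[_ /and3P[/eqP s_e _ _]].
    by move: ej_nle; rewrite -s_e expo_le_add.
  rewrite (op_conv_single (s0 := expo_sub e ej) (t0 := ej)) ?expo_subK //.
    by rewrite /below /lead expo_subK // (hlt_irr adm) !eqxx.
  move=> s t mu _; case: ifP => [|_]; last by rewrite eqxx.
  by case/andP=> _ /and3P[/eqP <- /eqP -> /eqP ->] _; rewrite expo_addK.
rewrite addrC addKr; apply: (locQ_conv pQ hQ) => s t mu contrib.
case: ifP => [/andP[below_s not_lead]|_]; last exact: locQ0.
apply: (locQ_mull pQ (q_loc s)); apply: (locC_locQQ pQ hQ (g_locC j t)).
apply: NNPP => /(lead_term contrib below_s) [mu0 t_ej s_e].
by move: not_lead; rewrite /lead s_e mu0 t_ej !eqxx.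
Qed.

Definition delta_index (e : expo n) : option 'I_r :=
  [pick j | expo_le (es j) e && [forall k : 'I_r, (k < j)%N ==> ~~ expo_le (es k) e]].

Lemma delta_index_some e j : delta_index e = Some j -> inDelta es j e.
Proof.
rewrite /delta_index; case: pickP => // j' /andP[ej_le /forallP first_j] [<-].
by split=> // k; apply/implyP.
Qed.

Lemma delta_index_none e : delta_index e = None -> inDeltabar es e.
Proof.
rewrite /delta_index; case: pickP => // none_first _ k; apply/negP=> ek_le.
have ex_le : exists m, [exists k' : 'I_r, (k' == m :> nat) && expo_le (es k') e].
  by exists k; apply/existsP; exists k; rewrite eqxx.
case: (ex_minnP ex_le) => m /existsP[k0 /andP[/eqP k0_m ek0_le]] m_min.
have := none_first k0; rewrite ek0_le /= => /negbT/forallPn[k1].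
rewrite negb_imply negbK => /andP[k1_lt ek1_le].
have : (m <= k1)%N by apply: m_min; apply/existsP; exists k1; rewrite eqxx.
by rewrite -k0_m leqNgt k1_lt.
Qed.

Lemma inDelta_inj e j k : inDelta es j e -> inDelta es k e -> j = k.
Proof.
move=> [ej_le j_first] [ek_le k_first]; apply: val_inj => /=.
case: (ltngtP j k) => // [/k_first|/j_first]; [by rewrite ej_le | by rewrite ek_le].
Qed.

Lemma inDelta_Nbar e j : inDelta es j e -> ~ inDeltabar es e.
Proof. by move=> [ej_le _] /(_ j); rewrite ej_le. Qed.

Section Existence.
Variables (P : op F n) (N : nat).
Hypothesis P_deg : forall e, P e != 0 -> (deg e <= N)%N.
Hypothesis P_locC : forall e, LC (P e).

(* All unknowns are packed in one function v: q_j s = v (s + e_j) when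
   s + e_j lies in Delta_j, and R e = v e when e lies in Delta-bar. *)
Definition quot_of (v : expo n -> F) j s :=
  if (delta_index (expo_add s (es j)) == Some j) && (deg (expo_add s (es j)) <= N)%N
  then v (expo_add s (es j)) else 0.

Definition rem_of (v : expo n -> F) e := if delta_index e is None then v e else 0.

Definition above_sum v e := \sum_j mul_above (quot_of v j) j e.

Definition division_step v e :=
  if (deg e <= N)%N then
    if delta_index e is Some j then (P e - above_sum v e) / g j (es j)
    else P e - above_sum v e
  else 0.

Lemma division_step_local v1 v2 e :
  (forall y, above lt N y e -> v1 y = v2 y) -> division_step v1 e = division_step v2 e.
Proof.
move=> eq_above; rewrite /division_step /above_sum.
suff -> : \sum_j mul_above (quot_of v1 j) j e = \sum_j mul_above (quot_of v2 j) j e by [].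
apply: eq_bigr => j _; apply: eq_op_conv => s t mu _.
case: ifP => // e_lt; rewrite /quot_of; case: ifP => // /andP[_ deg_le].
by rewrite eq_above.
Qed.

Variable V : expo n -> F.
Hypothesis V_fix : forall e, V e = division_step V e.

Lemma V_deg e : (N < deg e)%N -> V e = 0.
Proof. by move=> deg_gt; rewrite V_fix /division_step leqNgt deg_gt. Qed.

Lemma above_sum_deg e : (N < deg e)%N -> above_sum V e = 0.
Proof.
move=> deg_gt; apply: big1 => j _; apply: op_conv_eq0 => s t mu _.
case: ifP => // /hlt_deg e_le; rewrite /quot_of.
by case: ifP => [/andP[_ deg_le]|_]; [lia | rewrite mul0r].
Qed.

Lemma V_locC e : LC (V e).
Proof.
elim/(well_founded_ind (wf_above adm N)): e => e IH.
rewrite V_fix /division_step; case: ifP => deg_le; last exact: locC0.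
have above_locC : LC (above_sum V e).
  apply: (locC_sum h_neq0) => j; apply: (locC_conv h_neq0) => s t mu _.
  case: ifP => [e_lt|_]; last exact: locC0.
  apply: (locC_mul _ (g_locC j t)); rewrite /quot_of.
  by case: ifP => [/andP[_ ?]|_]; [apply: IH | apply: locC0].
have rest_locC := locC_sub h_neq0 (P_locC e) above_locC.
by case: delta_index => [j|//]; apply: locC_mul rest_locC (lc_inv_locC j).
Qed.

Lemma quot_locC j s : LC (quot_of V j s).
Proof. by rewrite /quot_of; case: ifP => _; [apply: V_locC | apply: locC0]. Qed.

Lemma lead_sum e : \sum_j mul_lead (quot_of V j) j e =
  if (deg e <= N)%N then (if delta_index e is Some j then V e * g j (es j) else 0) else 0.
Proof.
have lead_supp j : mul_lead (quot_of V j) j e != 0 ->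
    [/\ delta_index e = Some j, (deg e <= N)%N
       & mul_lead (quot_of V j) j e = V e * g j (es j)].
  rewrite /mul_lead; case: ifP => [ej_le|_]; last by rewrite eqxx.
  rewrite /quot_of expo_subK //; case: ifP => [|_]; last by rewrite mul0r eqxx.
  by case/andP => /eqP -> ->.
have lead0 j : (deg e <= N)%N -> delta_index e != Some j -> mul_lead (quot_of V j) j e = 0.
  by move=> deg_le /eqP not_j; apply/eqP/negPn/negP => /lead_supp[].
case: ifP => deg_le; last first.
  by apply: big1 => j _; apply/eqP/negPn/negP => /lead_supp[_]; rewrite deg_le.
case e_j: (delta_index e) => [j|]; last by apply: big1 => j _; rewrite lead0 ?e_j.
rewrite (bigD1 j) //= big1 ?addr0 => [|k k_j]; last first.
  by rewrite lead0 // e_j; apply: contra k_j => /eqP[->].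
have [ej_le _] := delta_index_some e_j.
by rewrite /mul_lead ej_le /quot_of expo_subK // e_j eqxx deg_le.
Qed.

Definition rest_of e := P e - \sum_j op_mul (quot_of V j) (g j) e - rem_of V e.

Lemma rest_modQ e : LQ (rest_of e).
Proof.
pose Z j := op_mul (quot_of V j) (g j) e - mul_above (quot_of V j) j e
            - mul_lead (quot_of V j) j e.
have Z_modQ : LQ (\sum_j Z j).
  by apply: (locQ_sum pQ hQ) => j; apply: op_mul_lead_modQ; apply: quot_locC.
have step_eq : P e - above_sum V e - \sum_j mul_lead (quot_of V j) j e - rem_of V e = 0.
  rewrite lead_sum /rem_of V_fix /division_step; case: ifP => deg_le; last first.
    have P0 : P e = 0 by apply/eqP/negPn/negP => /P_deg; rewrite deg_le.
    by rewrite P0 above_sum_deg ?ltnNge ?deg_le //; case: delta_index; rewrite !subrr.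
  rewrite deg_le; case: delta_index => [j|]; last by rewrite subr0 subrr.
  by rewrite divfK ?lc_neq0 // subrr subr0.
have -> : rest_of e =
    (P e - above_sum V e - \sum_j mul_lead (quot_of V j) j e - rem_of V e) - \sum_j Z j.
  rewrite /rest_of /above_sum /Z !sumrB; ring.
by rewrite step_eq sub0r; apply: (locQ_opp pQ).
Qed.

Lemma quot_deg j s : quot_of V j s != 0 -> (deg s <= N)%N.
Proof.
rewrite /quot_of; case: ifP => [/andP[_ deg_le] _|_]; last by rewrite eqxx.
by move: deg_le; rewrite deg_add; lia.
Qed.

Lemma rem_deg e : rem_of V e != 0 -> (deg e <= N)%N.
Proof.
rewrite /rem_of leqNgt; case: delta_index => [_|]; first by rewrite eqxx.
by apply: contra => /V_deg ->.
Qed.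

Lemma rest_deg NG : (forall j t, g j t != 0 -> (deg t <= NG)%N) ->
  forall e, rest_of e != 0 -> (deg e <= N + NG)%N.
Proof.
move=> g_deg e; rewrite leqNgt; apply: contra => deg_gt.
have P0 : P e = 0 by apply/eqP/negPn/negP => /P_deg; lia.
have R0 : rem_of V e = 0 by apply/eqP/negPn/negP => /rem_deg; lia.
rewrite /rest_of P0 R0 big1 ?subrr // => j _.
rewrite op_mulE; apply: op_conv_eq0 => s t mu [st_eq mu_le].
have deg_e : deg e = (deg s + deg t)%N by rewrite -deg_add st_eq deg_shift.
have [->|/quot_deg s_le] := eqVneq (quot_of V j s) 0; first by rewrite mul0r.
have [->|/g_deg t_le] := eqVneq (g j t) 0; first by rewrite mulr0.
lia.
Qed.

Lemma division_data_of_fix :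
  division_data Q h g es P (quot_of V) (rem_of V) rest_of.
Proof.
have [NG g_deg] := deg_bounded_family (fun j => (g_inD j).1).
have quot_bd j : deg_bounded (quot_of V j) by exists N => s; apply: quot_deg.
have rem_bd : deg_bounded (rem_of V) by exists N => e; apply: rem_deg.
have rest_bd : deg_bounded rest_of by exists (N + NG)%N => e; apply: rest_deg.
have rem_locC e : LC (rem_of V e).
  by rewrite /rem_of; case: delta_index => [_|]; [apply: locC0 | apply: V_locC].
split; first by split=> [j|]; [split; first exact: quot_bd | split; split].
- by move=> e; rewrite /rest_of; ring.
- move=> j s; rewrite /Supp /quot_of; case: ifP => [|_]; last by rewrite eqxx.
  by case/andP=> /eqP e_j _ _; apply: delta_index_some.
- move=> e; rewrite /Supp /rem_of; case e_none: delta_index => [k|]; first by rewrite eqxx.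
  by move=> _; apply: delta_index_none.
- split; first by move=> j; split; [exact: quot_bd | exact: quot_locC].
    by split; last exact: rem_locC.
  by split; last exact: rest_modQ.
Qed.

End Existence.

Lemma division_exists P : inD LC P -> exists q R T, division_data Q h g es P q R T.
Proof.
move=> [[N P_deg] P_locC].
have [V V_fix] := exists_wf_fixpoint 0 (wf_above adm N) (@division_step_local P N).
by exists (quot_of N V), (rem_of V), (rest_of P N V); apply: division_data_of_fix.
Qed.

Section UniquenessModQ.
Variables (D : 'I_r -> op F n) (E : op F n).
Hypothesis D_locC : forall j s, LC (D j s).
Hypothesis D_supp : forall j s, D j s != 0 -> inDelta es j (expo_add s (es j)).
Hypothesis E_supp : forall e, E e != 0 -> inDeltabar es e.
Hypothesis D_deg : forall j, deg_bounded (D j).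
Hypothesis E_deg : deg_bounded E.
Hypothesis division_modQ : forall e, LQ (\sum_j op_mul (D j) (g j) e + E e).

Definition bad e := (exists j s, expo_add s (es j) = e /\ ~ LQ (D j s)) \/ ~ LQ (E e).

Lemma bad_deg : exists N, forall e, bad e -> (deg e <= N)%N.
Proof.
have [ND D_le] := deg_bounded_family D_deg; have [NE E_le] := E_deg.
exists (ND + \max_j deg (es j) + NE)%N => e [[j [s [<- D_nQ]]]|E_nQ].
  have /D_le : D j s != 0 by apply: contra_not_neq D_nQ => ->; apply: locQ0.
  by have := @leq_bigmax _ (fun j => deg (es j)) j; rewrite deg_add; lia.
have /E_le : E e != 0 by apply: contra_not_neq E_nQ => ->; apply: locQ0.
lia.
Qed.

Lemma lead_sum_modQ e : (forall f, bad f -> ~~ hlt e f) ->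
  LQ (\sum_j mul_lead (D j) j e + E e).
Proof.
move=> e_max.
have above_modQ j : LQ (mul_above (D j) j e).
  apply: (locQ_conv pQ hQ) => s t mu _; case: ifP => [e_lt|_]; last exact: locQ0.
  apply: (locQ_mulr pQ) (g_locC j t); apply: NNPP => D_nQ.
  suff /e_max : bad (expo_add s (es j)) by rewrite e_lt.
  by left; exists j, s.
pose Z j := op_mul (D j) (g j) e - mul_above (D j) j e - mul_lead (D j) j e.
have -> : \sum_j mul_lead (D j) j e + E e =
    (\sum_j op_mul (D j) (g j) e + E e) - \sum_j mul_above (D j) j e - \sum_j Z j.
  rewrite /Z !sumrB; ring.
apply: (locQ_sub pQ hQ).
  exact: (locQ_sub pQ hQ (division_modQ e) (locQ_sum pQ hQ above_modQ)).
by apply: (locQ_sum pQ hQ) => j; apply: op_mul_lead_modQ (D_locC j).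
Qed.

Lemma not_bad e : ~ bad e.
Proof.
move=> bad_e; have [N bad_le] := bad_deg.
have [f [bad_f f_max]] := exists_hmax adm bad_le bad_e.
have lead_supp j : mul_lead (D j) j f != 0 -> inDelta es j f.
  rewrite /mul_lead; case: ifP => [ej_le|_]; last by rewrite eqxx.
  by rewrite mulf_eq0 negb_or => /andP[/D_supp]; rewrite expo_subK.
have := lead_sum_modQ f_max; case: bad_f => [[j [s [s_f D_nQ]]]|E_nQ].
  have f_j : inDelta es j f.
    by rewrite -s_f; apply: D_supp; apply: contra_not_neq D_nQ => ->; apply: locQ0.
  have E0 : E f = 0 by apply/eqP/negPn/negP => /E_supp; apply: inDelta_Nbar f_j.
  rewrite E0 addr0 (bigD1 j) //= big1 ?addr0 => [|k k_j]; last first.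
    by apply/eqP/negPn/negP => /lead_supp/inDelta_inj/(_ f_j) k_eq; rewrite k_eq eqxx in k_j.
  rewrite /mul_lead -s_f expo_le_add expo_addK => lead_modQ; apply: D_nQ.
  by rewrite -(mulfK (lc_neq0 j) (D j s)); apply: (locQ_mulr pQ) lead_modQ (lc_inv_locC j).
have f_bar : inDeltabar es f.
  by apply: E_supp; apply: contra_not_neq E_nQ => ->; apply: locQ0.
rewrite big1 ?add0r // => j _.
by apply/eqP/negPn/negP => /lead_supp/inDelta_Nbar; apply.
Qed.

Lemma division_zero_modQ : (forall j s, LQ (D j s)) /\ (forall e, LQ (E e)).
Proof.
split=> [j s|e]; apply: NNPP => nQ.
  by apply: (@not_bad (expo_add s (es j))); left; exists j, s.
by apply: (@not_bad e); right.
Qed.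

End UniquenessModQ.

Lemma division_unique P q R T q' R' T' :
    division_data Q h g es P q R T -> division_data Q h g es P q' R' T' ->
  (forall j, inD LQ (op_sub (q j) (q' j))) /\ inD LQ (op_sub R R').
Proof.
move=> [[q_bd [R_bd _]] P_eq q_supp R_supp [q_in _ T_in]].
move=> [[q'_bd [R'_bd _]] P_eq' q'_supp R'_supp [q'_in _ T'_in]].
have D_bd j : deg_bounded (op_sub (q j) (q' j)) := deg_bounded_sub (q_bd j).1 (q'_bd j).1.
have E_bd : deg_bounded (op_sub R R') := deg_bounded_sub R_bd.1 R'_bd.1.
have [] := @division_zero_modQ (fun j => op_sub (q j) (q' j)) (op_sub R R').
- move=> j s; exact: (locC_sub h_neq0 ((q_in j).2 s) ((q'_in j).2 s)).
- by move=> j s /op_sub_neq0[]; [apply: q_supp | apply: q'_supp].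
- by move=> e /op_sub_neq0[]; [apply: R_supp | apply: R'_supp].
- exact: D_bd.
- exact: E_bd.
- move=> e.
  have -> : \sum_j op_mul (op_sub (q j) (q' j)) (g j) e + op_sub R R' e = T' e - T e.
    have sub_eq (a a' b b' c c' : F) :
        a + b + c = a' + b' + c' -> a - a' + (b - b') = c' - c.
      by move=> abc; apply: (addIr (a' + b' + c')); rewrite -{2}abc; ring.
    under eq_bigr do rewrite op_mul_subl.
    by rewrite sumrB; apply: sub_eq; rewrite -P_eq -P_eq'.
  exact: (locQ_sub pQ hQ (T'_in.2 e) (T_in.2 e)).
- move=> D_modQ E_modQ; split=> [j|]; split.
  + exact: D_bd.
  + exact: D_modQ.
  + exact: E_bd.
  + exact: E_modQ.
Qed.

End Division.

Theorem mainTheorem3 (C : idomainType) (n : nat)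
    (lt : mi n * mi n -> mi n * mi n -> bool)
    (Q : pred C) (h : C) (r : nat)
    (g : 'I_r -> op {fraction C} n) (es : 'I_r -> expo n) :
  no_int_in_primes C ->
  admissible lt ->
  prime_ideal Q ->
  h \notin Q ->
  (forall j, inD (locC h) (g j) /\ ~ inD (locQ Q h) (g j)) ->
  (* es j = exp^{mod Q}(g j) *)
  (forall j, is_expmodQ lt Q (g j) (es j)) ->
  (* the numerator of lc^{mod Q}(g j) divides h in C *)
  (forall j, exists c c' : C,
      [/\ c' \notin Q,
          g j (es j) = FracField.tofrac c / FracField.tofrac c'
        & exists d : C, h = c * d]) ->
  forall P : op {fraction C} n, inD (locC h) P ->
    (exists q R T, division_data Q h g es P q R T) /\
    (forall q R T q' R' T',
        division_data Q h g es P q R T ->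
        division_data Q h g es P q' R' T' ->
        (forall j, inD (locQ Q h) (op_sub (q j) (q' j)))
        /\ inD (locQ Q h) (op_sub R R')).
Proof.
(* The integer coefficients of a product are never inverted. *)
move=> _ adm pQ hQ g_spec g_exp g_lc P P_in.
have g_inD j : inD (locC h) (g j) := (g_spec j).1.
have lc_inv j : locC h (g j (es j))^-1.
  have [c [c' [c'Q lc_eq [d h_eq]]]] := g_lc j.
  exact: (locC_inv_dvd pQ hQ c'Q (g_exp j).1 lc_eq h_eq).
split; first exact: (division_exists adm pQ hQ g_inD g_exp lc_inv P_in).
by move=> q R T q' R' T'; apply: (division_unique adm pQ hQ g_inD g_exp lc_inv).
Qed.
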